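(* Let $k\in\mathbb{N}$ be fixed. Then the function $\beta\mapsto\delta(k,\beta)$ is strictly increasing on $[1,+\infty)$. Moreover $\delta(k,1)<0$ and $\delta(k,\sqrt2)>0$.
   Context: $\mathbb{N}=\{0,1,2,\dots\}$. For $t\ge 0$ let $q(t)=\lfloor t+1\rfloor/2$ if $\lfloor t\rfloor$ is odd and $q(t)=t-\lfloor t\rfloor/2$ if $\lfloor t\rfloor$ is even, and $p(t)=t+1-q(t)$. For $\beta\ge1$ let $\hat\sigma(t,\beta)\in(0,1)$ be the unique solution $\sigma$ of $\frac{p(t)\sigma}{\sqrt{1-\sigma^2}}+\frac{q(t)\sigma}{\sqrt{\beta^2-\sigma^2}}=1$, and $l(t,\beta)=\frac{p(t)}{\sqrt{1-\hat\sigma^2}}+\frac{\beta^2q(t)}{\sqrt{\beta^2-\hat\sigma^2}}-t-\sqrt2$. For $k\in\mathbb{N}$, $\delta(k,\beta)=l(2k+2,\beta)-l(2k,\beta)$. *)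

From Stdlib Require Import Reals Lra ZArith ClassicalEpsilon.
Open Scope R_scope.

Definition flo (t : R) : Z := Int_part t.

Definition qf (t : R) : R :=
  if Z.odd (flo t) then IZR (Int_part (t + 1)) / 2
  else t - IZR (flo t) / 2.

Definition pf (t : R) : R := t + 1 - qf t.

Definition is_sigma_hat (t beta sigma : R) : Prop :=
  0 < sigma < 1 /\
  pf t * sigma / sqrt (1 - sigma ^ 2) + qf t * sigma / sqrt (beta ^ 2 - sigma ^ 2) = 1.

(* the (unique) solution, chosen by Hilbert's epsilon *)
Definition sigma_hat (t beta : R) : R :=
  epsilon (inhabits 0) (fun s => is_sigma_hat t beta s).

Definition lf (t beta : R) : R :=
  let s := sigma_hat t beta in
  pf t / sqrt (1 - s ^ 2) + beta ^ 2 * qf t / sqrt (beta ^ 2 - s ^ 2) - t - sqrt 2.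

Definition delta (k : nat) (beta : R) : R :=
  lf (2 * INR k + 2) beta - lf (2 * INR k) beta.

From Stdlib Require Import Reals Lra Psatz ZArith ClassicalEpsilon.
From Coquelicot Require Import Coquelicot.
Open Scope R_scope.

(* The equation defining
   sigma_hat says that the x-derivative of Phi vanishes, and Phi is concave in x, so
   sigma_hat maximises Phi (p t) (q t) b on [0, 1] and l(t, b) = max Phi - t - sqrt 2.
   For t = 2n we have (p, q) = (n + 1, n), so delta(k, b) is a difference of two such
   maxima minus 2. Evaluating each maximum at the maximiser belonging to the other b,
   monotonicity reduces to the increments of b |-> sqrt(b^2 - x^2) lying between
   b2 - b1 and (b2 - b1) / sqrt(1 - x^2), together with (k + 1) x <= sqrt(1 - x^2) at
   the critical point. At b = 1 the maxima are sqrt((2k+3)^2 + 1) and sqrt((2k+1)^2 + 1)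
   by Cauchy-Schwarz; at b = sqrt 2 the test point x = 0 (x = 3/5 when k = 0) suffices. *)

Definition Phi (p q b x : R) : R := p * sqrt (1 - x ^ 2) + q * sqrt (b ^ 2 - x ^ 2) + x.

Definition critical (p q b s : R) : Prop :=
  0 < s < 1 /\ p * s / sqrt (1 - s ^ 2) + q * s / sqrt (b ^ 2 - s ^ 2) = 1.

Lemma le_sqrt_of_sq_le (y z : R) : y ^ 2 <= z -> y <= sqrt z.
Proof.
  intros H. rewrite <- pow2_abs in H.
  apply Rle_trans with (Rabs y); [apply Rle_abs|].
  rewrite <- (sqrt_pow2 (Rabs y)) by apply Rabs_pos.
  now apply sqrt_le_1_alt.
Qed.

Lemma sqrt_lt_of_lt_sq (y z : R) : 0 < y -> z < y ^ 2 -> sqrt z < y.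
Proof.
  intros Hy H. destruct (Rle_or_lt 0 z) as [Hz|Hz].
  - rewrite <- (sqrt_pow2 y) by lra. now apply sqrt_lt_1_alt.
  - rewrite sqrt_neg_0 by lra. exact Hy.
Qed.

Lemma sqrt_sub_sq_le_tangent (c x y : R) : 0 <= c - x ^ 2 -> 0 < c - y ^ 2 ->
  sqrt (c - x ^ 2) <= sqrt (c - y ^ 2) - y * (x - y) / sqrt (c - y ^ 2).
Proof.
  intros Hx Hy.
  assert (Ha : 0 < sqrt (c - y ^ 2)) by (apply sqrt_lt_R0; lra).
  pose proof (sqrt_sqrt _ (Rlt_le _ _ Hy)) as Ea.
  pose proof (sqrt_sqrt _ Hx) as Ew. pose proof (sqrt_pos (c - x ^ 2)) as Hw.
  set (a := sqrt (c - y ^ 2)) in *; set (w := sqrt (c - x ^ 2)) in *.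
  (* (c - x y)^2 - (c - x^2)(c - y^2) = c (x - y)^2 *)
  assert (Hwa : w * a <= c - x * y).
  { assert (Hxy : 0 <= c - x * y) by nra.
    assert (Hsq : (w * a) * (w * a) <= (c - x * y) * (c - x * y)).
    { replace ((w * a) * (w * a)) with ((w * w) * (a * a)) by ring.
      rewrite Ew, Ea.
      assert (0 <= c * ((x - y) * (x - y))) by (apply Rmult_le_pos; [nra | apply Rle_0_sqr]).
      nra. }
    nra. }
  apply Rmult_le_reg_r with a; [lra|].
  replace ((a - y * (x - y) / a) * a) with (a * a - y * (x - y)) by (field; lra).
  nra.
Qed.

Lemma Phi_le_critical (p q b s x : R) : 0 <= p -> 0 <= q -> 1 <= b ->
  critical p q b s -> x ^ 2 <= 1 -> Phi p q b x <= Phi p q b s.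
Proof.
  intros Hp Hq Hb [Hs Heq] Hx.
  assert (HA : 0 < sqrt (1 - s ^ 2)) by (apply sqrt_lt_R0; nra).
  assert (HB : 0 < sqrt (b ^ 2 - s ^ 2)) by (apply sqrt_lt_R0; nra).
  pose proof (sqrt_sub_sq_le_tangent 1 x s ltac:(lra) ltac:(nra)) as T1.
  pose proof (sqrt_sub_sq_le_tangent (b ^ 2) x s ltac:(nra) ltac:(nra)) as T2.
  unfold Phi.
  set (A := sqrt (1 - s ^ 2)) in *; set (B := sqrt (b ^ 2 - s ^ 2)) in *.
  assert (E : p * (s * (x - s) / A) + q * (s * (x - s) / B)
              = (x - s) * (p * s / A + q * s / B)) by (field; lra).
  rewrite Heq in E.
  apply Rmult_le_compat_l with (r := p) in T1; [|lra].
  apply Rmult_le_compat_l with (r := q) in T2; [|lra].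
  lra.
Qed.

Lemma Phi_critical_value (p q b s : R) : 1 <= b -> critical p q b s ->
  p / sqrt (1 - s ^ 2) + b ^ 2 * q / sqrt (b ^ 2 - s ^ 2) = Phi p q b s.
Proof.
  intros Hb [Hs Heq].
  assert (HA : 0 < sqrt (1 - s ^ 2)) by (apply sqrt_lt_R0; nra).
  assert (HB : 0 < sqrt (b ^ 2 - s ^ 2)) by (apply sqrt_lt_R0; nra).
  pose proof (sqrt_sqrt (1 - s ^ 2) ltac:(nra)) as EA.
  pose proof (sqrt_sqrt (b ^ 2 - s ^ 2) ltac:(nra)) as EB.
  unfold Phi.
  set (A := sqrt (1 - s ^ 2)) in *; set (B := sqrt (b ^ 2 - s ^ 2)) in *.
  transitivity (p * (A * A) / A + q * (B * B) / B + s * (p * s / A + q * s / B)).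
  - rewrite EA, EB. field. lra.
  - rewrite Heq. field. lra.
Qed.

Lemma critical_exists (p q b : R) : 1 <= p -> 0 <= q -> 1 <= b ->
  exists s, critical p q b s.
Proof.
  intros Hp Hq Hb.
  set (f := fun x => p * x / sqrt (1 - x ^ 2) + q * x / sqrt (b ^ 2 - x ^ 2) - 1).
  assert (Hc : forall a, 0 <= a <= 4/5 -> continuity_pt f a).
  { intros a Ha. apply continuity_pt_filterlim.
    apply (ex_derive_continuous f a).
    unfold f. auto_derive.
    repeat split; try apply Rgt_not_eq, sqrt_lt_R0; nra. }
  assert (H0 : f 0 < 0) by (unfold f, Rdiv; ring_simplify; lra).
  assert (H1 : 0 < f (4/5)).
  { unfold f.
    replace (1 - (4/5) ^ 2) with (3/5 * (3/5)) by field.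
    rewrite sqrt_square by lra.
    assert (0 < sqrt (b ^ 2 - (4/5) ^ 2)) by (apply sqrt_lt_R0; nra).
    assert (0 <= q * (4/5) / sqrt (b ^ 2 - (4/5) ^ 2))
      by (apply Rle_mult_inv_pos; lra).
    replace (p * (4/5) / (3/5)) with (4/3 * p) by field.
    lra. }
  destruct (Ranalysis5.IVT_interv f 0 (4/5) Hc ltac:(lra) H0 H1) as [z [Hz Hfz]].
  exists z. unfold f in Hfz. split.
  - split; [|lra]. destruct (Req_dec z 0) as [->|]; lra.
  - lra.
Qed.

Lemma qf_double (n : nat) : qf (2 * INR n) = INR n.
Proof.
  rewrite INR_IZR_INZ, <- mult_IZR.
  unfold qf, flo.
  assert (Hfloor : forall z, Int_part (IZR z) = z)
    by (intros z; symmetry; apply Int_part_spec; lra).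
  rewrite Hfloor, Z.odd_mul, mult_IZR. simpl. field.
Qed.

Lemma pf_double (n : nat) : pf (2 * INR n) = INR n + 1.
Proof. unfold pf. rewrite qf_double. ring. Qed.

Lemma lf_double (n : nat) (b : R) : 1 <= b ->
  exists s, critical (INR n + 1) (INR n) b s /\
            lf (2 * INR n) b = Phi (INR n + 1) (INR n) b s - 2 * INR n - sqrt 2.
Proof.
  intros Hb. pose proof (pos_INR n) as Hn.
  assert (Hs : critical (INR n + 1) (INR n) b (sigma_hat (2 * INR n) b)).
  { assert (H : is_sigma_hat (2 * INR n) b (sigma_hat (2 * INR n) b)).
    { unfold sigma_hat. apply epsilon_spec. unfold is_sigma_hat. rewrite pf_double, qf_double.
      apply critical_exists; lra. }
    unfold is_sigma_hat in H. rewrite pf_double, qf_double in H. exact H. }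
  exists (sigma_hat (2 * INR n) b). split; [exact Hs|].
  unfold lf. rewrite pf_double, qf_double, Phi_critical_value by assumption.
  reflexivity.
Qed.

Lemma delta_critical (k : nat) (b : R) : 1 <= b ->
  exists s u, critical (INR k + 2) (INR k + 1) b s /\ critical (INR k + 1) (INR k) b u /\
    delta k b = Phi (INR k + 2) (INR k + 1) b s - Phi (INR k + 1) (INR k) b u - 2.
Proof.
  intros Hb. unfold delta.
  destruct (lf_double (S k) b Hb) as [s [Hs Es]].
  destruct (lf_double k b Hb) as [u [Hu Eu]].
  rewrite S_INR in Hs, Es. replace (INR k + 1 + 1) with (INR k + 2) in Hs, Es by ring.
  exists s, u. split; [exact Hs|]. split; [exact Hu|].
  replace (2 * INR k + 2) with (2 * (INR k + 1)) by ring.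
  rewrite Es, Eu. ring.
Qed.

Lemma sub_le_sqrt_sub_sq_sub (b1 b2 y : R) : 0 <= b1 <= b2 -> y ^ 2 <= b1 ^ 2 ->
  b2 - b1 <= sqrt (b2 ^ 2 - y ^ 2) - sqrt (b1 ^ 2 - y ^ 2).
Proof.
  intros Hb Hy.
  pose proof (sqrt_sqrt (b1 ^ 2 - y ^ 2) ltac:(lra)) as E1.
  pose proof (sqrt_sqrt (b2 ^ 2 - y ^ 2) ltac:(nra)) as E2.
  assert (L1 : sqrt (b1 ^ 2 - y ^ 2) <= b1)
    by (rewrite <- (sqrt_pow2 b1) at 2 by lra; apply sqrt_le_1_alt; nra).
  assert (L2 : sqrt (b2 ^ 2 - y ^ 2) <= b2)
    by (rewrite <- (sqrt_pow2 b2) at 2 by lra; apply sqrt_le_1_alt; nra).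
  pose proof (sqrt_pos (b1 ^ 2 - y ^ 2)). pose proof (sqrt_pos (b2 ^ 2 - y ^ 2)).
  set (A1 := sqrt (b1 ^ 2 - y ^ 2)) in *; set (A2 := sqrt (b2 ^ 2 - y ^ 2)) in *.
  assert (E : (A2 - A1) * (A2 + A1) = (b2 - b1) * (b2 + b1))
    by (transitivity (A2 * A2 - A1 * A1); [ring | rewrite E1, E2; ring]).
  destruct (Rle_or_lt (b2 - b1) (A2 - A1)) as [Hle|Hlt]; [exact Hle|].
  exfalso. nra.
Qed.

Lemma sqrt_sub_sq_sub_le (b1 b2 u : R) : 1 <= b1 <= b2 -> u ^ 2 < 1 ->
  sqrt (b2 ^ 2 - u ^ 2) - sqrt (b1 ^ 2 - u ^ 2) <= (b2 - b1) / sqrt (1 - u ^ 2).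
Proof.
  intros Hb Hu.
  assert (Hc : 0 < sqrt (1 - u ^ 2)) by (apply sqrt_lt_R0; lra).
  pose proof (sqrt_sqrt (1 - u ^ 2) ltac:(lra)) as Ec.
  pose proof (sqrt_sqrt (b1 ^ 2 - u ^ 2) ltac:(nra)) as E1.
  pose proof (sqrt_sqrt (b2 ^ 2 - u ^ 2) ltac:(nra)) as E2.
  set (c := sqrt (1 - u ^ 2)) in *.
  (* b^2 - u^2 >= b^2 (1 - u^2) since b >= 1 *)
  assert (L : forall b, 1 <= b -> b * c <= sqrt (b ^ 2 - u ^ 2)).
  { intros b Hb1. apply le_sqrt_of_sq_le.
    replace ((b * c) ^ 2) with (b ^ 2 * (c * c)) by ring. rewrite Ec.
    assert (0 <= u ^ 2 * (b ^ 2 - 1)) by (apply Rmult_le_pos; nra).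
    nra. }
  pose proof (L b1 ltac:(lra)) as L1. pose proof (L b2 ltac:(lra)) as L2.
  set (B1 := sqrt (b1 ^ 2 - u ^ 2)) in *; set (B2 := sqrt (b2 ^ 2 - u ^ 2)) in *.
  apply Rmult_le_reg_r with c; [lra|].
  replace ((b2 - b1) / c * c) with (b2 - b1) by (field; lra).
  assert (Hsum : 0 < B1 + B2) by nra.
  apply Rmult_le_reg_r with (B1 + B2); [lra|].
  replace ((B2 - B1) * c * (B1 + B2)) with ((B2 * B2 - B1 * B1) * c) by ring.
  rewrite E1, E2. nra.
Qed.

Lemma critical_lt_mul_sqrt (K b u : R) : 0 <= K -> 1 <= b -> critical (K + 1) K b u ->
  K < (K + 1) * sqrt (1 - u ^ 2).
Proof.
  intros HK Hb [Hu Heq].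
  assert (Hc : 0 < sqrt (1 - u ^ 2)) by (apply sqrt_lt_R0; nra).
  assert (0 < sqrt (b ^ 2 - u ^ 2)) by (apply sqrt_lt_R0; nra).
  assert (0 <= K * u / sqrt (b ^ 2 - u ^ 2)) by (apply Rle_mult_inv_pos; nra).
  pose proof (sqrt_sqrt (1 - u ^ 2) ltac:(nra)) as Ec.
  set (c := sqrt (1 - u ^ 2)) in *.
  assert (Hle : (K + 1) * u <= c).
  { apply Rmult_le_reg_r with (/ c); [apply Rinv_0_lt_compat; lra|].
    rewrite Rinv_r by lra. unfold Rdiv in *. lra. }
  (* otherwise u <= c / (K+1) <= K / (K+1)^2 and c <= K / (K+1) would give u^2 + c^2 < 1 *)
  destruct (Rlt_or_le K ((K + 1) * c)) as [Hlt|Hge]; [exact Hlt|].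
  exfalso. nra.
Qed.

Lemma delta_strict_mono (k : nat) (b1 b2 : R) : 1 <= b1 -> b1 < b2 -> delta k b1 < delta k b2.
Proof.
  intros Hb1 Hb12. pose proof (pos_INR k) as HK. set (K := INR k) in *.
  destruct (delta_critical k b1 ltac:(lra)) as [s [u1 [Hs [Hu1 E1]]]].
  destruct (delta_critical k b2 ltac:(lra)) as [s2 [u [Hs2 [Hu E2]]]].
  fold K in Hs, Hu1, E1, Hs2, Hu, E2.
  pose proof Hs as [Hs01 _]. pose proof Hu as [Hu01 _].
  assert (M2 : Phi (K + 2) (K + 1) b2 s <= Phi (K + 2) (K + 1) b2 s2)
    by (apply Phi_le_critical; [lra | lra | lra | exact Hs2 | nra]).
  assert (M1 : Phi (K + 1) K b1 u <= Phi (K + 1) K b1 u1)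
    by (apply Phi_le_critical; [lra | lra | lra | exact Hu1 | nra]).
  assert (D : forall p q x,
             Phi p q b2 x - Phi p q b1 x = q * (sqrt (b2 ^ 2 - x ^ 2) - sqrt (b1 ^ 2 - x ^ 2)))
    by (intros; unfold Phi; ring).
  pose proof (D (K + 2) (K + 1) s) as Ds. pose proof (D (K + 1) K u) as Du.
  pose proof (critical_lt_mul_sqrt K b2 u HK ltac:(lra) Hu) as Hw.
  pose proof (sub_le_sqrt_sub_sq_sub b1 b2 s ltac:(lra) ltac:(nra)) as Gs.
  pose proof (sqrt_sub_sq_sub_le b1 b2 u ltac:(lra) ltac:(nra)) as Gu.
  assert (Hc : 0 < sqrt (1 - u ^ 2)) by (apply sqrt_lt_R0; nra).
  set (c := sqrt (1 - u ^ 2)) in *.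
  assert (Wgt : K * ((b2 - b1) / c) < (K + 1) * (b2 - b1)).
  { replace (K * ((b2 - b1) / c)) with ((b2 - b1) * K / c) by (field; lra).
    apply Rlt_le_trans with ((b2 - b1) * ((K + 1) * c) / c).
    - unfold Rdiv. apply Rmult_lt_compat_r; [apply Rinv_0_lt_compat; lra|].
      apply Rmult_lt_compat_l; lra.
    - right. field. lra. }
  nra.
Qed.

Lemma mul_sqrt_one_sub_sq_add_le (a x : R) : x ^ 2 <= 1 ->
  a * sqrt (1 - x ^ 2) + x <= sqrt (a ^ 2 + 1).
Proof.
  intros Hx. apply le_sqrt_of_sq_le.
  pose proof (sqrt_sqrt (1 - x ^ 2) ltac:(lra)) as Ec.
  set (c := sqrt (1 - x ^ 2)) in *.
  (* Cauchy-Schwarz, using c^2 + x^2 = 1 *)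
  assert (E : (a ^ 2 + 1) - (a * c + x) ^ 2 = (a * x - c) ^ 2)
    by (transitivity ((a ^ 2 + 1) * (c * c + x ^ 2) - (a * c + x) ^ 2);
        [rewrite Ec; ring | ring]).
  pose proof (pow2_ge_0 (a * x - c)). lra.
Qed.

Lemma Phi_one (p q x : R) : Phi p q 1 x = (p + q) * sqrt (1 - x ^ 2) + x.
Proof. unfold Phi. rewrite pow1. ring. Qed.

Lemma Phi_one_at (a p q : R) : p + q = a -> 0 <= a ->
  Phi p q 1 (/ sqrt (a ^ 2 + 1)) = sqrt (a ^ 2 + 1).
Proof.
  intros Ha Ha0. rewrite Phi_one, Ha.
  assert (Hr : 0 < sqrt (a ^ 2 + 1)) by (apply sqrt_lt_R0; nra).
  pose proof (sqrt_sqrt (a ^ 2 + 1) ltac:(nra)) as Er.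
  set (r := sqrt (a ^ 2 + 1)) in *.
  replace (1 - (/ r) ^ 2) with ((a / r) ^ 2)
    by (apply Rmult_eq_reg_r with (r * r); [|nra];
        replace ((a / r) ^ 2 * (r * r)) with (a ^ 2) by (field; lra);
        replace ((1 - (/ r) ^ 2) * (r * r)) with (r * r - 1) by (field; lra);
        rewrite Er; ring).
  rewrite sqrt_pow2 by (apply Rle_mult_inv_pos; lra).
  transitivity ((a ^ 2 + 1) / r); [field; lra|].
  rewrite <- Er. field. lra.
Qed.

Lemma sqrt_sq_add_one_sub_lt (a c : R) : 0 <= c < a ->
  sqrt (a ^ 2 + 1) - sqrt (c ^ 2 + 1) < a - c.
Proof.
  intros Hac.
  assert (HA : a < sqrt (a ^ 2 + 1))
    by (rewrite <- (sqrt_pow2 a) at 1 by lra; apply sqrt_lt_1_alt; nra).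
  assert (HC : c < sqrt (c ^ 2 + 1))
    by (rewrite <- (sqrt_pow2 c) at 1 by lra; apply sqrt_lt_1_alt; nra).
  pose proof (sqrt_sqrt (a ^ 2 + 1) ltac:(nra)) as EA.
  pose proof (sqrt_sqrt (c ^ 2 + 1) ltac:(nra)) as EC.
  set (A := sqrt (a ^ 2 + 1)) in *; set (C := sqrt (c ^ 2 + 1)) in *.
  assert (E : (A - C) * (A + C) = (a - c) * (a + c))
    by (transitivity (A * A - C * C); [ring | rewrite EA, EC; ring]).
  destruct (Rlt_or_le (A - C) (a - c)) as [Hlt|Hge]; [exact Hlt|].
  exfalso. nra.
Qed.

Lemma delta_one_neg (k : nat) : delta k 1 < 0.
Proof.
  pose proof (pos_INR k) as HK. set (K := INR k) in *.
  destruct (delta_critical k 1 ltac:(lra)) as [s [u [Hs [Hu E]]]].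
  fold K in Hs, Hu, E. rewrite E.
  set (r := sqrt ((2 * K + 1) ^ 2 + 1)).
  assert (Hr : 1 <= r) by (rewrite <- sqrt_1; apply sqrt_le_1_alt; nra).
  assert (Lu : sqrt ((2 * K + 1) ^ 2 + 1) <= Phi (K + 1) K 1 u).
  { rewrite <- (Phi_one_at (2 * K + 1) (K + 1) K) by lra.
    apply Phi_le_critical; [lra | lra | lra | exact Hu |].
    fold r. rewrite pow_inv.
    apply Rmult_le_reg_r with (r ^ 2); [nra|]. rewrite Rinv_l by nra. nra. }
  assert (Us : Phi (K + 2) (K + 1) 1 s <= sqrt ((2 * K + 3) ^ 2 + 1)).
  { destruct Hs as [Hs _]. rewrite Phi_one.
    replace (K + 2 + (K + 1)) with (2 * K + 3) by ring.
    apply mul_sqrt_one_sub_sq_add_le. nra. }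
  pose proof (sqrt_sq_add_one_sub_lt (2 * K + 3) (2 * K + 1) ltac:(lra)).
  lra.
Qed.

Lemma Phi_sqrt2_le (K x : R) : 0 <= K -> x ^ 2 <= 1 ->
  Phi (K + 1) K (sqrt 2) x <= sqrt ((K + 1) ^ 2 + 1) + K * sqrt 2.
Proof.
  intros HK Hx. unfold Phi. rewrite pow2_sqrt by lra.
  assert (sqrt (2 - x ^ 2) <= sqrt 2) by (apply sqrt_le_1_alt; nra).
  pose proof (mul_sqrt_one_sub_sq_add_le (K + 1) x Hx).
  nra.
Qed.

Lemma delta_sqrt2_pos (k : nat) : 0 < delta k (sqrt 2).
Proof.
  pose proof (pos_INR k) as HK. set (K := INR k) in *.
  set (r := sqrt 2).
  assert (Er : r * r = 2) by (apply sqrt_sqrt; lra).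
  assert (Hr : 1 < r) by (rewrite <- sqrt_1; apply sqrt_lt_1_alt; lra).
  destruct (delta_critical k r ltac:(lra)) as [s [u [Hs [Hu E]]]].
  fold K in Hs, Hu, E. rewrite E.
  assert (Uu : Phi (K + 1) K r u <= sqrt ((K + 1) ^ 2 + 1) + K * r)
    by (destruct Hu as [Hu _]; apply Phi_sqrt2_le; nra).
  assert (Ls : forall x, x ^ 2 <= 1 -> Phi (K + 2) (K + 1) r x <= Phi (K + 2) (K + 1) r s)
    by (intros x Hx; apply Phi_le_critical; [lra | lra | lra | exact Hs | exact Hx]).
  destruct k as [|k'].
  - (* at k = 0 the bound at x = 0 is not strict; test x = 3/5 instead *)
    replace K with 0 in * by (unfold K; simpl; ring).
    specialize (Ls (3/5) ltac:(lra)).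
    assert (V : Phi (0 + 2) (0 + 1) r (3/5) = 11/5 + sqrt (2 - (3/5) ^ 2)).
    { unfold Phi, r. rewrite pow2_sqrt by lra.
      replace (1 - (3/5) ^ 2) with (4/5 * (4/5)) by field.
      rewrite sqrt_square by lra. field. }
    replace (sqrt ((0 + 1) ^ 2 + 1)) with r in Uu by (unfold r; f_equal; ring).
    pose proof (sqrt_sqrt (2 - (3/5) ^ 2) ltac:(lra)) as Ev.
    pose proof (sqrt_pos (2 - (3/5) ^ 2)).
    set (v := sqrt (2 - (3/5) ^ 2)) in *.
    assert (Hv : r - 1/5 < v).
    { destruct (Rlt_or_le (r - 1/5) v) as [Hlt|Hge]; [exact Hlt|].
      exfalso. assert (v * v <= (r - 1/5) * (r - 1/5)) by nra. nra. }
    lra.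
  - assert (HK1 : 1 <= K) by (unfold K; rewrite S_INR; pose proof (pos_INR k'); lra).
    specialize (Ls 0 ltac:(lra)).
    assert (V : Phi (K + 2) (K + 1) r 0 = K + 2 + (K + 1) * r).
    { unfold Phi, r. rewrite pow2_sqrt by lra.
      replace (1 - 0 ^ 2) with 1 by ring. replace (2 - 0 ^ 2) with 2 by ring.
      rewrite sqrt_1. ring. }
    assert (sqrt ((K + 1) ^ 2 + 1) < K + r) by (apply sqrt_lt_of_lt_sq; nra).
    lra.
Qed.

Theorem lemma3p10 (k : nat) :
  (forall b1 b2 : R, 1 <= b1 -> b1 < b2 -> delta k b1 < delta k b2) /\
  delta k 1 < 0 /\ 0 < delta k (sqrt 2).
Proof.
  split; [intros b1 b2; apply delta_strict_mono|].
  split; [apply delta_one_neg | apply delta_sqrt2_pos].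
Qed.
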